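(* Suppose $P_{II*}\subseteq P_{II}$ is a chain (totally ordered by inclusion). Then $\mathcal C_{\Xi\text{-unc}}\neq\emptyset$ for every filter $\Xi\in P_{III*}$.
   Context: Let $n\ge1$, $L=\{1,\dots,n\}$, and for $i\in L$ let $\mathcal H_i$ be a Hilbert space with $1<\dim\mathcal H_i<\infty$; $\mathcal H_X=\bigotimes_{i\in X}\mathcal H_i$ and $\mathcal D_X$ is the set of density operators on $\mathcal H_X$. $P_I$ is the set of partitions of $L$ ordered by refinement. For $\xi\in P_I$, $\mathcal D_{\xi\text{-unc}}=\{\varrho\in\mathcal D_L:\varrho=\bigotimes_{X\in\xi}\varrho_X,\ \varrho_X\in\mathcal D_X\}$, and for $S\subseteq P_I$, $\mathcal D_{S\text{-unc}}=\bigcup_{\xi\in S}\mathcal D_{\xi\text{-unc}}$. $P_{II}$ is the set of nonempty down-sets of $P_I$, ordered by inclusion; $P_{II*}$ is a nonempty subset of $P_{II}$ and $P_{III*}$ is the set of nonempty up-sets of $P_{II*}$. For $\Xi\in P_{III*}$: $\overline\Xi=P_{II*}\setminus\Xi$ and $\mathcal C_{\Xi\text{-unc}}=\bigcap_{\boldsymbol\xi'\in\overline\Xi}(\mathcal D_L\setminus\mathcal D_{\boldsymbol\xi'\text{-unc}})\cap\bigcap_{\boldsymbol\xi\in\Xi}\mathcal D_{\boldsymbol\xi\text{-unc}}$. *)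

From HB Require Import structures.
From mathcomp Require Import all_boot all_order all_algebra.
Set Implicit Arguments. Unset Strict Implicit. Unset Printing Implicit Defensive.
Import Order.TTheory GRing.Theory Num.Theory.
Local Open Scope ring_scope.

(* The computational basis of H_X = (x)_{i in X} H_i is indexed by
   dependent functions assigning to each i in X a basis label in 'I_(d i). *)
Definition site (n : nat) (X : {set 'I_n}) := {i : 'I_n | i \in X}.

Definition basisX (n : nat) (d : 'I_n -> nat) (X : {set 'I_n}) :=
  {dffun forall j : site X, 'I_(d (val j))}.

Definition basisL (n : nat) (d : 'I_n -> nat) :=
  {dffun forall i : 'I_n, 'I_(d i)}.

Definition restr (n : nat) (d : 'I_n -> nat) (X : {set 'I_n}) (a : basisL d)
  : basisX d X := [ffun j : site X => a (val j)].

(* A linear operator on a finite-dim Hilbert space with ON basis T,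
   given by its matrix r a b = <a| r |b>.  Density operator: self-adjoint,
   positive semidefinite, trace one. *)
Definition density (C : numClosedFieldType) (T : finType) (r : T -> T -> C) : Prop :=
  (forall a b, r b a = (r a b)^*) /\
  (forall v : T -> C, 0 <= \sum_(a : T) \sum_(b : T) (v a)^* * r a b * v b) /\
  \sum_(a : T) r a a = 1.

Definition is_partition (n : nat) (xi : {set {set 'I_n}}) : bool :=
  partition xi [set: 'I_n].

Definition refines (n : nat) (ups xi : {set {set 'I_n}}) : bool :=
  [forall Y in ups, [exists X in xi, Y \subset X]].

(* D_{xi-unc}: states of the form (x)_{X in xi} rho_X with rho_X in D_X *)
Definition unc (C : numClosedFieldType) (n : nat) (d : 'I_n -> nat)
  (xi : {set {set 'I_n}}) (rho : basisL d -> basisL d -> C) : Prop :=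
  density rho /\
  exists rhoX : forall X : {set 'I_n}, basisX d X -> basisX d X -> C,
    (forall X, X \in xi -> density (rhoX X)) /\
    (forall a b, rho a b = \prod_(X in xi) rhoX X (restr X a) (restr X b)).

Definition uncS (C : numClosedFieldType) (n : nat) (d : 'I_n -> nat)
  (S : {set {set {set 'I_n}}}) (rho : basisL d -> basisL d -> C) : Prop :=
  exists2 xi, xi \in S & unc xi rho.

Definition in_PII (n : nat) (S : {set {set {set 'I_n}}}) : Prop :=
  (forall xi, xi \in S -> is_partition xi) /\
  S != set0 /\
  (forall xi ups, xi \in S -> is_partition ups -> refines ups xi -> ups \in S).

Definition C_unc (C : numClosedFieldType) (n : nat) (d : 'I_n -> nat)
  (PIIs Xi : {set {set {set {set 'I_n}}}}) (rho : basisL d -> basisL d -> C) : Prop :=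
  density rho /\
  (forall S', S' \in PIIs :\: Xi -> ~ uncS S' rho) /\
  (forall S, S \in Xi -> uncS S rho).

From HB Require Import structures.
From mathcomp Require Import all_boot all_order all_algebra.
Import Order.TTheory GRing.Theory Num.Theory.
Local Open Scope ring_scope.
Set Implicit Arguments. Unset Strict Implicit.

(* Because P_II* is a chain, a single partition xi separates the filter Xi
   from the rest of P_II*: xi lies in the least member of Xi and in no member
   outside Xi.  Take the state which is, on every block of xi, the classical
   mixture (|0..0><0..0| + |1..1><1..1|)/2; it is xi-uncorrelated, hence in
   D_{S-unc} for every S in Xi.  If xi does not refine upsilon, some block Y
   of upsilon splits a block X of xi.  For an upsilon-product state,
   exchanging the labels on Y between the all-0 string and the string that is
   1 exactly on X preserves the product of the two diagonal entries, whereas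
   for our state it turns a nonzero product into zero.  So our state is
   upsilon-uncorrelated only for upsilon coarser than xi, and as members of
   P_II are down-sets, no member outside Xi contains such an upsilon. *)

Lemma sumr_indicator1 (C : numClosedFieldType) (T : finType) (b : T) :
  \sum_(a : T) (a == b)%:R = 1 :> C.
Proof. by rewrite (bigD1 b) //= eqxx big1 ?addr0 // => a /negbTE ->. Qed.

Lemma diag_density (C : numClosedFieldType) (T : finType) (p : T -> C) :
  (forall a, 0 <= p a) -> \sum_a p a = 1 ->
  density (fun a b => (a == b)%:R * p a).
Proof.
move=> p_ge0 p_sum1; split; [|split].
- move=> a b; have [->|nab] := eqVneq a b; first by rewrite mul1r geC0_conj.
  by rewrite !mul0r conjC0.
- move=> v; apply: sumr_ge0 => a _.
  rewrite (bigD1 a) //= big1 ?addr0 => [|b nba]; last first.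
    by rewrite eq_sym (negbTE nba) mul0r mulr0 mul0r.
  by rewrite eqxx mul1r mulrAC mulr_ge0 // mulrC mul_conjC_ge0.
- by under eq_bigr => a _ do rewrite eqxx mul1r.
Qed.

Lemma subset_of_chain_card (T : finType) (S U : {set T}) :
  S \subset U \/ U \subset S -> (#|S| <= #|U|)%N -> S \subset U.
Proof. by case=> // sUS leSU; have /eqP -> : U == S by rewrite eqEcard sUS. Qed.

Lemma chain_upset_separated (T : finType) (F Xi : {set {set T}}) :
  (forall S U, S \in F -> U \in F -> S \subset U \/ U \subset S) ->
  (forall S, S \in F -> S != set0) ->
  Xi \subset F -> Xi != set0 ->
  (forall S U, S \in Xi -> U \in F -> S \subset U -> U \in Xi) ->
  exists x, (forall S, S \in Xi -> x \in S) /\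
            (forall S, S \in F :\: Xi -> x \notin S).
Proof.
move=> chainF F_neq0 /subsetP sXiF /set0Pn[S Xi_S] Xi_up.
have [S0 Xi_S0 S0_min] := @arg_minnP _ S (mem Xi) (fun S => #|S|) Xi_S.
have F_S0 := sXiF _ Xi_S0.
have S0_least U : U \in Xi -> S0 \subset U.
  move=> Xi_U; apply: subset_of_chain_card (S0_min U Xi_U).
  exact: chainF (sXiF _ Xi_U).
have [out0|/set0Pn[S1' out_S1']] := eqVneq (F :\: Xi) set0.
  have /set0Pn[x S0x] := F_neq0 _ F_S0.
  exists x; split=> [U /S0_least/subsetP|U]; first exact.
  by rewrite out0 inE.
have [S1 out_S1 S1_max] :=
  @arg_maxnP _ S1' (mem (F :\: Xi)) (fun S => #|S|) out_S1'.
have outP U : U \in F :\: Xi -> U \notin Xi /\ U \in F.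
  by rewrite inE => /andP[].
have [S1_Xi F_S1] := outP _ out_S1.
have S1_greatest U : U \in F :\: Xi -> U \subset S1.
  move=> /[dup] /S1_max le_S1 /outP[_ F_U].
  exact: subset_of_chain_card (chainF _ _ F_U F_S1) le_S1.
have sS1S0 : S1 \subset S0.
  have [//|sS0S1] := chainF _ _ F_S1 F_S0.
  by rewrite (Xi_up _ _ Xi_S0 F_S1 sS0S1) in S1_Xi.
have /subsetPn[x S0x S1'x] : ~~ (S0 \subset S1).
  apply: contraNN S1_Xi => sS0S1.
  by have /eqP <- : S0 == S1 by rewrite eqEsubset sS0S1.
exists x; split=> [U /S0_least/subsetP|U /S1_greatest/subsetP sUS1]; first exact.
by apply: contra S1'x; apply: sUS1.
Qed.

Section Labels.
Variables (n : nat) (d : 'I_n -> nat).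

Definition swap_on (Y : {set 'I_n}) (a b : basisL d) : basisL d :=
  [ffun i => if i \in Y then a i else b i].

Lemma restr_swap_on_sub (Y Z : {set 'I_n}) (a b : basisL d) :
  Z \subset Y -> restr Z (swap_on Y a b) = restr Z a.
Proof. by move=> /subsetP sZY; apply/ffunP => j; rewrite !ffunE sZY ?(valP j). Qed.

Lemma restr_swap_on_disjoint (Y Z : {set 'I_n}) (a b : basisL d) :
  [disjoint Z & Y] -> restr Z (swap_on Y a b) = restr Z b.
Proof.
by move=> dis_ZY; apply/ffunP => j; rewrite !ffunE (disjointFr dis_ZY) ?(valP j).
Qed.

Lemma unc_swap_on (C : numClosedFieldType) ups (rho : basisL d -> basisL d -> C)
    (Y : {set 'I_n}) (a b : basisL d) :
  is_partition ups -> unc ups rho -> Y \in ups ->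
  rho (swap_on Y a b) (swap_on Y a b) * rho (swap_on Y b a) (swap_on Y b a) =
  rho a a * rho b b.
Proof.
case/and3P=> _ triv_ups _ [_ [sigma [_ rhoE]]] ups_Y.
rewrite !rhoE -!big_split; apply: eq_bigr => Z ups_Z /=.
have [->|neq_ZY] := eqVneq Z Y; first by rewrite !restr_swap_on_sub.
have dis_ZY := trivIsetP triv_ups Z Y ups_Z ups_Y neq_ZY.
by rewrite !restr_swap_on_disjoint // mulrC.
Qed.

Section Partition.
Variable xi : {set {set 'I_n}}.
Hypothesis xi_part : is_partition xi.

Lemma restr_partition_inj (a b : basisL d) :
  (forall X, X \in xi -> restr X a = restr X b) -> a = b.
Proof.
have /and3P[/eqP cov_xi _ _] := xi_part.
move=> eq_ab; apply/ffunP => i.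
have xi_i : i \in cover xi by rewrite cov_xi inE.
have blk_i : i \in pblock xi i by rewrite mem_pblock.
have /ffunP/(_ (exist _ i blk_i)) := eq_ab _ (pblock_mem xi_i).
by rewrite !ffunE.
Qed.

Lemma prod_restr_eq (C : numClosedFieldType) (a b : basisL d) :
  \prod_(X in xi) ((restr X a == restr X b)%:R : C) = (a == b)%:R.
Proof.
have [->|neq_ab] := eqVneq a b; first by apply: big1 => X _; rewrite eqxx.
have [X xi_X neq_X] : exists2 X, X \in xi & restr X a != restr X b.
  apply/exists_inP; apply: contraR neq_ab => /exists_inPn eq_X.
  by apply/eqP/restr_partition_inj => X /eq_X/negPn/eqP.
by rewrite (bigD1 X) //= (negbTE neq_X) mul0r.
Qed.

End Partition.
End Labels.

Section CorrelatedState.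
Variables (C : numClosedFieldType) (n : nat) (d : 'I_n -> nat).
Hypothesis d_gt1 : forall i, (1 < d i)%N.

Definition bit_label (t : bool) (i : 'I_n) : 'I_(d i) :=
  if t then Ordinal (d_gt1 i) else Ordinal (ltnW (d_gt1 i)).

Lemma bit_label_inj i : injective (bit_label^~ i).
Proof. by case; case=> // /(congr1 val). Qed.

Definition const_label (X : {set 'I_n}) (t : bool) : basisX d X :=
  [ffun j : site X => bit_label t (val j)].

Definition block_label (xi : {set {set 'I_n}}) (f : {set 'I_n} -> bool)
  : basisL d :=
  [ffun i => bit_label (f (pblock xi i)) i].

Lemma restr_block_label xi f X : trivIset xi -> X \in xi ->
  restr X (block_label xi f) = const_label X (f X).
Proof.
move=> triv_xi xi_X; apply/ffunP => j.
by rewrite !ffunE (def_pblock triv_xi xi_X (valP j)).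
Qed.

Lemma restr_const_label_at (a : basisL d) (X : {set 'I_n}) t i : i \in X ->
  restr X a = const_label X t -> a i = bit_label t i.
Proof. by move=> X_i /ffunP/(_ (exist _ i X_i)); rewrite !ffunE. Qed.

Definition corr_weight (X : {set 'I_n}) (c : basisX d X) : C :=
  2^-1 * \sum_(t : bool) (c == const_label X t)%:R.

Lemma corr_weight_ge0 X (c : basisX d X) : 0 <= corr_weight c.
Proof. by rewrite mulr_ge0 ?invr_ge0 ?ler0n ?sumr_ge0. Qed.

Lemma corr_weight_sum X : \sum_(c : basisX d X) corr_weight c = 1.
Proof.
rewrite -mulr_sumr exchange_big /=.
under eq_bigr do rewrite sumr_indicator1.
by rewrite sumr_const card_bool mulVf ?pnatr_eq0.
Qed.

Lemma corr_weight_const_neq0 X t : corr_weight (const_label X t) != 0.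
Proof.
rewrite mulf_neq0 ?invr_eq0 ?pnatr_eq0 // big_bool /= -natrD pnatr_eq0.
by case: t; rewrite eqxx ?addn_eq0 ?andbF.
Qed.

Lemma corr_weight_nonconst X (c : basisX d X) :
  (forall t, c != const_label X t) -> corr_weight c = 0.
Proof.
move=> c_nonconst; rewrite /corr_weight big1 ?mulr0 // => t _.
by rewrite (negbTE (c_nonconst t)).
Qed.

Definition corr_state (xi : {set {set 'I_n}}) (a b : basisL d) : C :=
  (a == b)%:R * \prod_(X in xi) corr_weight (restr X a).

Section Partition.
Variable xi : {set {set 'I_n}}.
Hypothesis xi_part : is_partition xi.

Lemma corr_state_trace : \sum_a \prod_(X in xi) corr_weight (restr X a) = 1.
Proof.
have triv_xi : trivIset xi by case/and3P: xi_part.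
have prodE a : \prod_(X in xi) corr_weight (restr X a) =
    2^-1 ^+ #|xi| *
    \sum_(f in pffun_on false (mem xi) predT) (a == block_label xi f)%:R.
  rewrite big_split /= prodr_const (big_distr_big false); congr (_ * _).
  apply: eq_bigr => f _; rewrite -(prod_restr_eq xi_part C).
  by apply: eq_bigr => X xi_X; rewrite restr_block_label.
under eq_bigr do rewrite prodE.
rewrite -mulr_sumr exchange_big /=.
under eq_bigr do rewrite sumr_indicator1.
rewrite sumr_const card_pffun_on card_bool natrX -exprMn.
by rewrite mulVf ?expr1n ?pnatr_eq0.
Qed.

Lemma corr_state_density : density (corr_state xi).
Proof.
apply: diag_density; last exact: corr_state_trace.
by move=> a; apply: prodr_ge0 => X _; apply: corr_weight_ge0.
Qed.

Lemma corr_state_unc : unc xi (corr_state xi).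
Proof.
split; first exact: corr_state_density.
exists (fun X c c' => (c == c')%:R * corr_weight c); split.
  move=> X _; apply: diag_density; [exact: corr_weight_ge0 | exact: corr_weight_sum].
by move=> a b; rewrite big_split /= prod_restr_eq.
Qed.

Lemma corr_state_block_label_neq0 f :
  corr_state xi (block_label xi f) (block_label xi f) != 0.
Proof.
have triv_xi : trivIset xi by case/and3P: xi_part.
rewrite /corr_state eqxx mul1r; apply/prodf_neq0 => X xi_X.
by rewrite restr_block_label ?corr_weight_const_neq0.
Qed.

Lemma corr_state_nonconst X i j (a : basisL d) :
  X \in xi -> i \in X -> j \in X ->
  a i = bit_label true i -> a j = bit_label false j -> corr_state xi a a = 0.
Proof.
move=> xi_X X_i X_j a_i a_j.
rewrite /corr_state (bigD1 X) //= corr_weight_nonconst ?mul0r ?mulr0 //.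
move=> t; apply/eqP => restr_a.
move: (restr_const_label_at X_i restr_a) (restr_const_label_at X_j restr_a).
by rewrite a_i a_j => /bit_label_inj <- /bit_label_inj.
Qed.

Lemma unc_corr_state_refines ups :
  is_partition ups -> unc ups (corr_state xi) -> refines xi ups.
Proof.
move=> ups_part unc_ups; apply/forall_inP => X xi_X.
apply: contraT => /exists_inPn X_split.
have /and3P[_ triv_xi set0_xi] := xi_part.
have /and3P[/eqP cov_ups _ _] := ups_part.
have /set0Pn[i X_i] : X != set0 by apply: contraNneq set0_xi => <-.
have cov_i : i \in cover ups by rewrite cov_ups inE.
have ups_Y := pblock_mem cov_i; set Y := pblock ups i in ups_Y.
have Y_i : i \in Y by rewrite mem_pblock.
have /subsetPn[j X_j Y'j] := X_split Y ups_Y.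
set u := block_label xi (fun Z => Z == X); set z := block_label xi (fun=> false).
have uz_neq0 := mulf_neq0 (corr_state_block_label_neq0 (fun Z => Z == X))
                          (corr_state_block_label_neq0 (fun=> false)).
have := unc_swap_on u z ups_part unc_ups ups_Y.
rewrite (@corr_state_nonconst X i j) ?mul0r //.
- by move/esym/eqP; rewrite (negbTE uz_neq0).
- by rewrite !ffunE Y_i (def_pblock triv_xi xi_X X_i) eqxx.
- by rewrite !ffunE (negbTE Y'j).
Qed.

End Partition.
End CorrelatedState.

Unset Implicit Arguments. Set Strict Implicit.
Theorem proposition5 (C : numClosedFieldType) (n : nat) (d : 'I_n -> nat)
  (hn : (1 <= n)%N) (hd : forall i, (1 < d i)%N)
  (PIIs : {set {set {set {set 'I_n}}}})
  (hPII : forall S, S \in PIIs -> in_PII S)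
  (hne : PIIs != set0)
  (hchain : forall S T, S \in PIIs -> T \in PIIs -> S \subset T \/ T \subset S)
  (Xi : {set {set {set {set 'I_n}}}})
  (hXisub : Xi \subset PIIs) (hXine : Xi != set0)
  (hXiup : forall S T, S \in Xi -> T \in PIIs -> S \subset T -> T \in Xi) :
  exists rho : basisL d -> basisL d -> C, C_unc PIIs Xi rho.
Proof.
have PIIs_neq0 S : S \in PIIs -> S != set0 by case/hPII=> _ [].
have [xi [xi_Xi xi_out]] :=
  chain_upset_separated hchain PIIs_neq0 hXisub hXine hXiup.
have /set0Pn[S Xi_S] := hXine.
have xi_part : is_partition xi.
  by have [S_part _] := hPII S (subsetP hXisub S Xi_S); apply/S_part/xi_Xi.
exists (corr_state C hd xi); split; [exact: corr_state_density | split].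
- move=> S' out_S' [ups S'_ups unc_ups].
  have [S'_part [_ S'_down]] := hPII S' (subsetP (subsetDl _ _) S' out_S').
  have ups_part := S'_part ups S'_ups.
  have refines_xi := unc_corr_state_refines xi_part ups_part unc_ups.
  by move: (xi_out S' out_S'); rewrite (S'_down ups xi S'_ups xi_part refines_xi).
- by move=> S0 Xi_S0; exists xi; [apply: xi_Xi | apply: corr_state_unc].
Qed.
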